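(* Let $\mathcal{V}$ be a linear subspace of $\mathrm{A}_n(\mathbb{K})$. Let $C\subseteq\mathbb{K}^n$ be a linear hyperplane of $\mathbb{K}^n$ if $\#\mathbb{K}=2$, or a union $H_1\cup H_2$ of two linear hyperplanes of $\mathbb{K}^n$ otherwise. Assume that $E:=\{x\in\mathbb{K}^n:\dim\mathcal{V}x=n-1\}$ is included in $C$, where $\mathcal{V}x:=\{Mx\mid M\in\mathcal{V}\}$. Then $\dim\mathcal{V}\leq\binom{n-1}{2}$.
   Context: $\mathrm{A}_n(\mathbb{K})$ denotes the space of alternating $n\times n$ matrices over the field $\mathbb{K}$ (skew-symmetric with zero diagonal). *)

From HB Require Import structures.
From mathcomp Require Import all_boot all_order all_algebra.
Set Implicit Arguments. Unset Strict Implicit. Unset Printing Implicit Defensive.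
Import GRing.Theory.
Local Open Scope ring_scope.

Definition alternating (K : fieldType) (n : nat) (A : 'M[K]_n) : Prop :=
  A^T = - A /\ (forall i, A i i = 0).

Definition Vx (K : fieldType) (n : nat) (V : {vspace 'M[K]_n}) (x : 'cV[K]_n)
  : {vspace 'cV[K]_n} := (linfun (mulmxr x) @: V)%VS.

Definition hyperplane (K : fieldType) (n : nat) (H : {vspace 'cV[K]_n}) : Prop :=
  (\dim H).+1 = n.

Definition card_is_2 (K : fieldType) : Prop := forall x : K, x = 0 \/ x = 1.

From HB Require Import structures.
From mathcomp Require Import all_boot all_order all_algebra.
From mathcomp Require Import zify.
From Stdlib Require Import Classical.
Set Implicit Arguments. Unset Strict Implicit. Unset Printing Implicit Defensive.
Import GRing.Theory.
Local Open Scope ring_scope.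

(* Since x^T M x = 0, the space V x is orthogonal to x, so dim V x <= n - 1;
   call x generic when equality holds.  We prove the contrapositive of the
   theorem by induction on n: if dim V > C(n-1, 2), then for any two proper
   subspaces H1, H2 (required to be equal when #K = 2) some generic vector
   lies outside H1 and H2.

   After the change of basis V -> P^T V P we may assume that e0 avoids H1
   and H2.  Either e0 is generic, or dim V e0 < n - 1; since
   dim V = dim V e0 + dim residual(V), where the residual space consists of
   the minors (rows and columns 1..n-1) of the matrices of V killing e0, the
   residual space then has dimension > C(n-2, 2).  Induction yields a generic
   y for it outside the kernel of the first row of some M0 in V with
   M0 e0 <> 0; every z = t e0 + (0, y) is then generic for V, and t is chosen
   so that z avoids H1 and H2 (a line meets each subspace at most once). *)

Section AlternatingSpaces.
Variable K : fieldType.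

Definition alt_space n (V : {vspace 'M[K]_n}) : Prop :=
  forall M, M \in V -> alternating M.

Lemma dimv_ltn (vT : vectType K) (U W : {vspace vT}) v :
  (U <= W)%VS -> v \in W -> v \notin U -> (\dim U < \dim W)%N.
Proof.
move=> sUW vW; rewrite (ltn_leqif (dimv_leqif_sup sUW)).
by apply: contra => /subvP; apply.
Qed.

Lemma dim_ltn_full n (U : {vspace 'cV[K]_n}) v : v \notin U -> (\dim U < n)%N.
Proof.
by move=> vU; have := dimv_ltn (subvf U) (memvf v) vU; rewrite dimvf dim_matrix mulr1.
Qed.

Lemma exists_notin n (U : {vspace 'cV[K]_n}) :
  (\dim U < n)%N -> exists x, x \notin U.
Proof.
move=> dU; have /subvPn [x _ xU] : ~~ (fullv <= U)%VS.
  by apply: contraL dU => /dimvS; rewrite dimvf dim_matrix mulr1 -leqNgt.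
by exists x.
Qed.

Lemma dim_img_inj (aT rT : vectType K) (f : {linear aT -> rT}) (U : {vspace aT}) :
  injective f -> \dim (linfun f @: U) = \dim U.
Proof.
move=> inj_f; have /lker0P/eqP kf0 : injective (linfun f).
  by move=> a b; rewrite !lfunE; apply: inj_f.
by rewrite limg_dim_eq // kf0 capv0.
Qed.

Lemma nonzero_entry n (z : 'cV[K]_n) : z != 0 -> exists i, z i 0 != 0.
Proof.
move=> nz; case: (pickP (fun i => z i 0 != 0)) => [i zi|z0]; first by exists i.
case/eqP: nz; apply/matrixP => i j; rewrite ord1 mxE.
by move/negbFE/eqP: (z0 i).
Qed.

Lemma trmx_1x1 (A : 'M[K]_1) : A^T = A.
Proof. by apply/matrixP => i j; rewrite mxE !ord1. Qed.

Lemma alternating_antisym n (N : 'M[K]_n) :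
  alternating N -> forall i j, N j i = - N i j.
Proof. by case=> tN _ i j; move/matrixP: tN => /(_ i j); rewrite !mxE. Qed.

(* The quadratic form of an alternating matrix vanishes: writing N = U - U^T
   with U strictly upper triangular, x^T N x is a 1x1 matrix minus its
   transpose. *)
Lemma alternating_quad0 n (N : 'M[K]_n) (x : 'cV[K]_n) :
  alternating N -> x^T *m N *m x = 0.
Proof.
move=> aN; have [_ N0] := aN.
pose U := \matrix_(i, j) (if (i < j)%N then N i j else 0) : 'M[K]_n.
have -> : N = U - U^T.
  apply/matrixP => i j; rewrite !mxE.
  case: (ltngtP i j) => [_|_|/ord_inj ->]; first by rewrite subr0.
    by rewrite sub0r (alternating_antisym aN i j) opprK.
  by rewrite N0 subr0.
rewrite mulmxBr mulmxBl.
have -> : x^T *m U^T *m x = (x^T *m U *m x)^T by rewrite !trmx_mul trmxK mulmxA.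
by rewrite trmx_1x1 subrr.
Qed.

(* V x is orthogonal to x, hence has dimension at most n - 1. *)
Lemma dim_Vx_le n (V : {vspace 'M[K]_n}) z :
  alt_space V -> (\dim (Vx V z) <= n.-1)%N.
Proof.
move=> aV; have [->|/nonzero_entry [i zi]] := eqVneq z 0.
  have : (Vx V 0 <= 0)%VS.
    by apply/subvP => w /memv_imgP [M _ ->]; rewrite lfunE /= mulmx0 memv0.
  by move/dimvS; rewrite dimv0 leqn0 => /eqP ->.
pose f := linfun (mulmx z^T) : 'Hom('cV[K]_n, 'M[K]_1).
have Vx_ker : (Vx V z <= lker f)%VS.
  apply/subvP => w /memv_imgP [M MV ->].
  by rewrite memv_ker !lfunE /= mulmxA alternating_quad0 //; apply: aV.
have : delta_mx i 0 \notin lker f.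
  rewrite memv_ker lfunE /= -colE; apply: contra zi => /eqP/matrixP/(_ 0 0).
  by rewrite !mxE => ->.
by move/dim_ltn_full; have := dimvS Vx_ker; lia.
Qed.

Definition e0 m : 'cV[K]_m.+1 := delta_mx ord0 ord0.

Definition minor0 m (M : 'M[K]_m.+1) : 'M[K]_m :=
  \matrix_(i, j) M (lift ord0 i) (lift ord0 j).

Fact minor0_linear m : linear (@minor0 m).
Proof. by move=> a A B; apply/matrixP => i j; rewrite !mxE. Qed.
HB.instance Definition _ m :=
  GRing.isLinear.Build K _ _ _ (@minor0 m) (@minor0_linear m).

Definition embed0 m (y : 'cV[K]_m) : 'cV[K]_m.+1 :=
  \col_i (if unlift ord0 i is Some j then y j 0 else 0).

Fact embed0_linear m : linear (@embed0 m).
Proof.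
move=> a A B; apply/matrixP => i j; rewrite !mxE.
by case: (unlift ord0 i) => [k|]; rewrite ?mxE // mulr0 addr0.
Qed.
HB.instance Definition _ m :=
  GRing.isLinear.Build K _ _ _ (@embed0 m) (@embed0_linear m).

Lemma embed0_first m (y : 'cV[K]_m) : embed0 y ord0 0 = 0.
Proof. by rewrite mxE unlift_none. Qed.

Lemma embed0_lift m (y : 'cV[K]_m) j : embed0 y (lift ord0 j) 0 = y j 0.
Proof. by rewrite mxE liftK. Qed.

Lemma embed0_inj m : injective (@embed0 m).
Proof.
move=> y1 y2 e; apply/matrixP => i j; rewrite ord1.
by move/matrixP: e => /(_ (lift ord0 i) 0); rewrite !embed0_lift.
Qed.

Lemma mulmx_e0 m (M : 'M[K]_m.+1) i : (M *m e0 m) i 0 = M i ord0.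
Proof. by rewrite -colE mxE. Qed.

Lemma mul_embed0 m (M : 'M[K]_m.+1) (y : 'cV[K]_m) i :
  (M *m embed0 y) i 0 = \sum_j M i (lift ord0 j) * y j 0.
Proof.
rewrite mxE big_ord_recl embed0_first mulr0 add0r.
by apply: eq_bigr => j _; rewrite embed0_lift.
Qed.

(* An alternating matrix killing e0 is the block matrix diag(0, minor0 M). *)
Lemma mul_embed0_ker m (M : 'M[K]_m.+1) (y : 'cV[K]_m) :
  alternating M -> M *m e0 m = 0 -> M *m embed0 y = embed0 (minor0 M *m y).
Proof.
move=> aM Me0; apply/matrixP => i j; rewrite ord1 mul_embed0.
case: (unliftP ord0 i) => [i'|] ->.
  by rewrite embed0_lift mxE; apply: eq_bigr => k _; rewrite mxE.
rewrite embed0_first; apply: big1 => k _.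
by rewrite (alternating_antisym aM) -mulmx_e0 Me0 mxE oppr0 mul0r.
Qed.

Lemma minor0_inj m (M : 'M[K]_m.+1) :
  alternating M -> M *m e0 m = 0 -> minor0 M = 0 -> M = 0.
Proof.
move=> aM Me0 M'0; apply/matrixP => i j; rewrite mxE.
case: (unliftP ord0 j) => [j'|] ->; last by rewrite -mulmx_e0 Me0 mxE.
case: (unliftP ord0 i) => [i'|] ->.
  by move/matrixP: M'0 => /(_ i' j'); rewrite !mxE.
by rewrite (alternating_antisym aM) -mulmx_e0 Me0 mxE oppr0.
Qed.

Lemma minor0_alt m (M : 'M[K]_m.+1) : alternating M -> alternating (minor0 M).
Proof.
move=> aM; split; last by move=> i; rewrite mxE; case: aM => _ ->.
by apply/matrixP => i j; rewrite !mxE (alternating_antisym aM).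
Qed.

Definition residual m (V : {vspace 'M[K]_m.+1}) : {vspace 'M[K]_m} :=
  (linfun (@minor0 m) @: (V :&: lker (linfun (mulmxr (e0 m)))))%VS.

Lemma residual_alt m (V : {vspace 'M[K]_m.+1}) : alt_space V -> alt_space (residual V).
Proof.
move=> aV M /memv_imgP [N]; rewrite memv_cap => /andP [NV _] ->.
by rewrite lfunE /=; apply/minor0_alt/aV.
Qed.

(* Rank-nullity for M |-> M e0 on V; its kernel embeds into the residual space
   since minor0 is injective on alternating matrices killing e0. *)
Lemma dim_residual_split m (V : {vspace 'M[K]_m.+1}) : alt_space V ->
  \dim V = (\dim (Vx V (e0 m)) + \dim (residual V))%N.
Proof.
move=> aV; rewrite /residual [\dim (linfun (@minor0 m) @: _)]limg_dim_eq.
  by rewrite -{1}(limg_ker_dim (linfun (mulmxr (e0 m))) V) addnC.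
apply/eqP; rewrite -subv0; apply/subvP => M.
rewrite !memv_cap !memv_ker !lfunE /= memv0 => /andP [/andP [MV Me0] M'0].
by apply/eqP/minor0_inj; [apply: aV | apply/eqP | apply/eqP].
Qed.

Lemma dim_alt_space_le n (V : {vspace 'M[K]_n}) : alt_space V -> (\dim V <= 'C(n, 2))%N.
Proof.
elim: n V => [|m IH] V aV.
  by have := dimvS (subvf V); rewrite dimvf dim_matrix.
rewrite dim_residual_split // binS bin1 [X in (_ <= X)%N]addnC.
by apply: leq_add; [apply: dim_Vx_le | apply/IH/residual_alt].
Qed.

Lemma line_meets_once n (H : {vspace 'cV[K]_n}) (e w : 'cV[K]_n) t1 t2 :
  e \notin H -> t1 *: e + w \in H -> t2 *: e + w \in H -> t1 = t2.
Proof.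
move=> eH h1 h2; apply/eqP; rewrite -subr_eq0; apply/negPn/negP => nz.
have : (t1 - t2)^-1 *: ((t1 *: e + w) - (t2 *: e + w)) \in H.
  by apply/memvZ/memvB.
rewrite opprD addrACA subrr addr0 -scalerBl scalerA mulVf // scale1r.
by apply/negP.
Qed.

Lemma line_hit_value n (H : {vspace 'cV[K]_n}) (e w : 'cV[K]_n) :
  e \notin H -> exists t0, forall t, t *: e + w \in H -> t = t0.
Proof.
move=> eH; case: (classic (exists t0, t0 *: e + w \in H)) => [[t0 h0]|none].
  by exists t0 => t ht; apply: line_meets_once eH ht h0.
by exists 0 => t ht; case: none; exists t.
Qed.

Lemma avoid_two_values (t1 t2 : K) : ~ card_is_2 K -> exists t, t != t1 /\ t != t2.
Proof.
move=> nK; have [c /not_or_and [c0 c1]] := not_all_ex_not _ _ nK.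
have shift_neq (a b : K) : a <> b -> t1 + a != t1 + b.
  by move=> ab; rewrite (inj_eq (addrI t1)); apply/eqP.
have [->|t21] := eqVneq t2 (t1 + 1).
  by exists (t1 + c); rewrite -[X in _ != X /\ _]addr0 !shift_neq.
exists (t1 + 1); split; last by rewrite eq_sym.
by rewrite -[X in _ != X]addr0 shift_neq // => /eqP; rewrite oner_eq0.
Qed.

(* Pairs of subspaces whose union a line avoiding both can always escape:
   a single subspace, or two subspaces when #K > 2. *)
Definition avoidable_pair n (H1 H2 : {vspace 'cV[K]_n}) : Prop :=
  H1 = H2 \/ ~ card_is_2 K.

Lemma line_avoids n (H1 H2 : {vspace 'cV[K]_n}) (e w : 'cV[K]_n) :
  avoidable_pair H1 H2 -> e \notin H1 -> e \notin H2 ->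
  exists t, t *: e + w \notin H1 /\ t *: e + w \notin H2.
Proof.
move=> hH e1 e2; have [t1 ht1] := line_hit_value w e1.
have notin1 t : t != t1 -> t *: e + w \notin H1 by apply: contra => /ht1 ->.
case: hH => [<-|nK].
  exists (t1 + 1); rewrite notin1 //.
  by rewrite -[X in _ != X]addr0 (inj_eq (addrI t1)) oner_eq0.
have [t2 ht2] := line_hit_value w e2.
have [t [tt1 tt2]] := avoid_two_values t1 t2 nK.
by exists t; split; [apply: notin1 | apply: contra tt2 => /ht2 ->].
Qed.

Definition first_row m (M : 'M[K]_m.+1) : 'rV[K]_m := \row_j M ord0 (lift ord0 j).

Lemma first_row_entry m (M : 'M[K]_m.+1) :
  alternating M -> M *m e0 m != 0 -> exists k, first_row M 0 k != 0.
Proof.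
move=> aM /nonzero_entry [i]; rewrite mulmx_e0.
case: (unliftP ord0 i) => [k|] ->; last by case: aM => _ ->; rewrite eqxx.
by exists k; rewrite mxE -oppr_eq0 -(alternating_antisym aM).
Qed.

Lemma first_entry_mul m (M : 'M[K]_m.+1) t (y : 'cV[K]_m) : alternating M ->
  (M *m (t *: e0 m + embed0 y)) ord0 0 = (first_row M *m y) 0 0.
Proof.
move=> [_ M0]; rewrite mulmxDr -scalemxAr [LHS]mxE [X in X + _]mxE mulmx_e0.
rewrite M0 mulr0 add0r mul_embed0 mxE.
by apply: eq_bigr => j _; rewrite mxE.
Qed.

(* The matrices of V killing e0 act on t e0 + (0, y) through their minors,
   so (0, residual(V) y) lies inside V (t e0 + (0, y)). *)
Lemma embed_Vx_residual m (V : {vspace 'M[K]_m.+1}) t (y : 'cV[K]_m) :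
  alt_space V ->
  (linfun (@embed0 m) @: Vx (residual V) y <= Vx V (t *: e0 m + embed0 y))%VS.
Proof.
move=> aV; apply/subvP => v /memv_imgP [w /memv_imgP [D /memv_imgP [N]]].
rewrite memv_cap memv_ker lfunE /= => /andP [NV /eqP Ne0] -> -> ->.
rewrite !lfunE /= -(mul_embed0_ker _ (aV _ NV) Ne0).
have -> : N *m embed0 y = N *m (t *: e0 m + embed0 y).
  by rewrite mulmxDr -scalemxAr Ne0 scaler0 add0r.
by have := memv_img (linfun (mulmxr (t *: e0 m + embed0 y))) NV; rewrite lfunE.
Qed.

(* If M0 in V satisfies first_row M0 *m y <> 0, then M0 (t e0 + (0, y)) has a
   nonzero first coordinate and so lies outside (0, residual(V) y): passing
   from y to t e0 + (0, y) gains a dimension. *)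
Lemma dim_Vx_grow m (V : {vspace 'M[K]_m.+1}) M0 t (y : 'cV[K]_m) :
  alt_space V -> M0 \in V -> (first_row M0 *m y) 0 0 != 0 ->
  (\dim (Vx (residual V) y) < \dim (Vx V (t *: e0 m + embed0 y)))%N.
Proof.
move=> aV M0V yM0; set z := t *: e0 m + embed0 y.
rewrite -(dim_img_inj _ (@embed0_inj m)).
apply: (dimv_ltn (embed_Vx_residual t y aV) (v := M0 *m z)).
  by have := memv_img (linfun (mulmxr z)) M0V; rewrite lfunE.
apply/memv_imgP => -[u _ /(congr1 (fun v : 'cV_m.+1 => v ord0 0))].
rewrite lfunE /= embed0_first (first_entry_mul _ _ (aV _ M0V)) => M0y0.
by rewrite M0y0 eqxx in yM0.
Qed.

Lemma bin2_pred m : (0 < m)%N -> 'C(m, 2) = ('C(m.-1, 2) + m.-1)%N.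
Proof. by case: m => // m _; rewrite binS bin1. Qed.

Definition generic_points n : Prop :=
  forall V : {vspace 'M[K]_n}, alt_space V -> ('C(n.-1, 2) < \dim V)%N ->
  forall H1 H2 : {vspace 'cV[K]_n}, (\dim H1 < n)%N -> (\dim H2 < n)%N ->
  avoidable_pair H1 H2 ->
  exists z, [/\ z \notin H1, z \notin H2 & \dim (Vx V z) = n.-1].

Lemma generic_points_step m : generic_points m ->
  forall V : {vspace 'M[K]_m.+1}, alt_space V -> ('C(m, 2) < \dim V)%N ->
  forall H1 H2 : {vspace 'cV[K]_m.+1}, avoidable_pair H1 H2 ->
  e0 m \notin H1 -> e0 m \notin H2 ->
  exists z, [/\ z \notin H1, z \notin H2 & \dim (Vx V z) = m].
Proof.
move=> IH V aV hV H1 H2 hH e1 e2.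
have Ve0_le := dim_Vx_le (e0 m) aV.
have [Ve0_gen|Ve0_small] := eqVneq (\dim (Vx V (e0 m))) m; first by exists (e0 m).
have split_V := dim_residual_split aV.
have res_le := dim_alt_space_le (residual_alt aV).
have [M0 M0V M0e0] : exists2 M0, M0 \in V & M0 *m e0 m != 0.
  have : ~~ (Vx V (e0 m) <= 0)%VS by rewrite subv0 -dimv_eq0 -lt0n; lia.
  case/subvPn => u /memv_imgP [M0 M0V ->]; rewrite memv0 lfunE => M0e0.
  by exists M0.
have [k M0k] := first_row_entry (aV _ M0V) M0e0.
have m_gt0 : (0 < m)%N := leq_ltn_trans (leq0n k) (ltn_ord k).
pose P := lker (linfun (mulmx (first_row M0))) : {vspace 'cV[K]_m}.
have dimP : (\dim P < m)%N.
  apply: (@dim_ltn_full _ _ (delta_mx k 0)).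
  rewrite memv_ker lfunE /= -colE; apply: contra M0k => /eqP/matrixP/(_ 0 0).
  by rewrite !mxE => ->.
have res_big : ('C(m.-1, 2) < \dim (residual V))%N.
  by move: hV; rewrite split_V bin2_pred //; lia.
have [y [yP _ y_gen]] :=
  IH (residual V) (residual_alt aV) res_big P P dimP dimP (or_introl erefl).
have M0y : (first_row M0 *m y) 0 0 != 0.
  apply: contra yP => /eqP M0y0; rewrite memv_ker lfunE /=.
  by apply/eqP/matrixP => i j; rewrite !ord1 M0y0 mxE.
have [t [t1 t2]] := line_avoids (embed0 y) hH e1 e2.
exists (t *: e0 m + embed0 y); split => //.
apply/eqP; rewrite eqn_leq dim_Vx_le //=.
by have := dim_Vx_grow t aV M0V M0y; rewrite y_gen prednK.
Qed.

(* Change of basis M |-> P^T M P, which maps V x to P^T (V (P x)). *)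
Definition conjm n (P : 'M[K]_n) (M : 'M[K]_n) : 'M[K]_n := P^T *m M *m P.

Fact conjm_linear n (P : 'M[K]_n) : linear (conjm P).
Proof. by move=> a A B; rewrite /conjm mulmxDr mulmxDl -scalemxAr -scalemxAl. Qed.
HB.instance Definition _ n P :=
  GRing.isLinear.Build K _ _ _ (@conjm n P) (conjm_linear P).

Lemma conjmK n (P : 'M[K]_n) : P \in unitmx -> cancel (conjm P) (conjm (invmx P)).
Proof.
move=> uP A; rewrite /conjm !mulmxA -trmx_mul mulmxV // trmx1 mul1mx.
by rewrite -mulmxA mulmxV // mulmx1.
Qed.

Lemma conjm_alt n (P N : 'M[K]_n) : alternating N -> alternating (conjm P N).
Proof.
move=> aN; have [tN _] := aN; split.
  by rewrite /conjm !trmx_mul trmxK tN mulNmx mulmxN mulmxA.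
move=> i; have -> : conjm P N i i = (row i (col i (conjm P N))) 0 0 by rewrite !mxE.
rewrite rowE colE /conjm -!mulmxA mulmxA.
have -> : delta_mx 0 i *m P^T = (P *m delta_mx i 0)^T :> 'rV[K]_n.
  by rewrite trmx_mul trmx_delta.
by rewrite mulmxA alternating_quad0 // mxE.
Qed.

Lemma dim_Vx_conj n (P : 'M[K]_n) (V : {vspace 'M[K]_n}) y : P \in unitmx ->
  \dim (Vx (linfun (conjm P) @: V) y) = \dim (Vx V (P *m y)).
Proof.
move=> uP; have uPt : P^T \in unitmx by rewrite unitmx_tr.
rewrite -(dim_img_inj (Vx V (P *m y)) (can_inj (mulKmx uPt))) /Vx -!limg_comp.
by congr (\dim (_ @: V)%VS); apply/lfunP => M; rewrite !comp_lfunE !lfunE /= /conjm !mulmxA.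
Qed.

Lemma mem_img_invmx n (P : 'M[K]_n) (H : {vspace 'cV[K]_n}) z : P \in unitmx ->
  (z \in (linfun (mulmx (invmx P)) @: H)%VS) = (P *m z \in H).
Proof.
move=> uP; apply/idP/idP => [/memv_imgP [h hH ->]|hz]; first by rewrite lfunE /= mulKVmx.
by have := memv_img (linfun (mulmx (invmx P))) hz; rewrite lfunE /= mulKmx.
Qed.

Lemma exists_notin2 n (H1 H2 : {vspace 'cV[K]_n}) :
  (\dim H1 < n)%N -> (\dim H2 < n)%N -> exists x, x \notin H1 /\ x \notin H2.
Proof.
move=> /exists_notin [x1 h1] /exists_notin [x2 h2].
case e12: (x1 \in H2); last by exists x1; rewrite e12.
case e21: (x2 \in H1); last by exists x2; rewrite e21.
exists (x1 + x2); split.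
  by apply/negP => h; move: h1; rewrite -(rpredDr _ e21) h.
by apply/negP => h; move: h2; rewrite -(rpredDl _ e12) h.
Qed.

Lemma trmx_pid1 m : (pid_mx 1 : 'M[K]_(1, m.+1))^T = e0 m.
Proof. by apply/matrixP => i j; rewrite !mxE !ord1 /=; case: i => [[|i] hi]. Qed.

Lemma basis_e0 m (x : 'cV[K]_m.+1) : x != 0 ->
  exists P : 'M[K]_m.+1, exists c : K, P \in unitmx /\ P *m (c *: e0 m) = x.
Proof.
move=> nx; pose A := x^T.
have rA : \rank A = 1%N.
  apply/eqP; rewrite eqn_leq rank_leq_row lt0n mxrank_eq0.
  by apply: contra nx => /eqP h; rewrite -[x]trmxK -/A h trmx0.
have hx := mulmx_ebase A; rewrite rA in hx.
exists (row_ebase A)^T, (col_ebase A 0 0).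
split; first by rewrite unitmx_tr row_ebase_unit.
have -> : x = (row_ebase A)^T *m (e0 m *m col_ebase A).
  by rewrite -trmx_pid1 -[col_ebase A]trmx_1x1 -!trmx_mul hx trmxK.
by rewrite {2}[col_ebase A]mx11_scalar mul_mx_scalar.
Qed.

Lemma all_generic_points n : generic_points n.
Proof.
elim: n => [|m IH] V aV hV H1 H2 dH1 dH2 hH.
  by have := dim_alt_space_le aV; move: hV; lia.
have [x [x1 x2]] := exists_notin2 dH1 dH2.
have nx : x != 0 by apply: contraNneq x1 => ->; apply: mem0v.
have [P [c [uP Pe0]]] := basis_e0 nx.
pose pull (H : {vspace 'cV[K]_m.+1}) := (linfun (mulmx (invmx P)) @: H)%VS.
have pull_e0 (H : {vspace 'cV[K]_m.+1}) : x \notin H -> e0 m \notin pull H.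
  rewrite mem_img_invmx //; apply: contra => h.
  by rewrite -Pe0 -scalemxAr; apply: memvZ.
have aW : alt_space (linfun (conjm P) @: V).
  by move=> M /memv_imgP [N NV ->]; rewrite lfunE; apply/conjm_alt/aV.
have hW : ('C(m, 2) < \dim (linfun (conjm P) @: V))%N.
  by rewrite dim_img_inj //; apply: can_inj (conjmK uP).
have hH' : avoidable_pair (pull H1) (pull H2) by case: hH => [->|]; [left|right].
have [z [z1 z2 z_gen]] := generic_points_step IH aW hW hH' (pull_e0 _ x1) (pull_e0 _ x2).
exists (P *m z); rewrite -!mem_img_invmx //.
by split => //; rewrite -dim_Vx_conj.
Qed.

End AlternatingSpaces.

Theorem mainTheorem18 (K : fieldType) (n : nat) (V : {vspace 'M[K]_n})
    (C : 'cV[K]_n -> Prop) :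
  (forall M, M \in V -> alternating M) ->
  (card_is_2 K ->
     exists H : {vspace 'cV[K]_n}, hyperplane H /\ (forall x, C x <-> x \in H)) ->
  (~ card_is_2 K ->
     exists H1 H2 : {vspace 'cV[K]_n}, hyperplane H1 /\ hyperplane H2 /\
       (forall x, C x <-> (x \in H1 \/ x \in H2))) ->
  (forall x : 'cV[K]_n, \dim (Vx V x) = n.-1 -> C x) ->
  (\dim V <= 'C(n.-1, 2))%N.
Proof.
move=> aV one_hyp two_hyp E_in_C; rewrite leqNgt; apply/negP => V_big.
have proper (H : {vspace 'cV[K]_n}) : hyperplane H -> (\dim H < n)%N.
  by rewrite /hyperplane; lia.
have [K2|K3] := classic (card_is_2 K).
  have [H [/proper dH C_H]] := one_hyp K2.
  have [z [zH _ z_gen]] := all_generic_points aV V_big dH dH (or_introl erefl).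
  by move/negP: zH; apply; apply/C_H/E_in_C.
have [H1 [H2 [/proper dH1 [/proper dH2 C_H]]]] := two_hyp K3.
have [z [z1 z2 z_gen]] := all_generic_points aV V_big dH1 dH2 (or_intror K3).
by case/C_H: (E_in_C z z_gen); apply/negP.
Qed.
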